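(* Let $D$ be an indecomposable chord diagram with $|D|$ chords, let $C$ be a chord diagram, and let $k,\ell$ be integers for which the operations below are defined. Then $$\mathrm{Ins}_{D,\ell}\big(R_k(C)\big)=R_k\big(\mathrm{Ins}_{D,\ell-2}(C)\big)\quad\text{if }k\le \ell-2,$$ $$\mathrm{Ins}_{D,\ell}\big(R_k(C)\big)=R_{k+2|D|}\big(\mathrm{Ins}_{D,\ell-1}(C)\big)\quad\text{if }1\le \ell-1\le k.$$
   Context: A chord diagram of size $n$ is a perfect matching of $2n$ linearly ordered points into $n$ pairs (chords), considered up to order isomorphism; the root chord is the chord containing the first point. Its intervals are the $2n-1$ gaps between consecutive points, numbered $1,\dots,2n-1$ from left to right. A diagram is indecomposable if it is not the concatenation (side by side juxtaposition) of two nonempty diagrams. For a diagram $C$ of size $n$ and $1\le k\le 2n-1$, $R_k(C)$ is the diagram of size $n+1$ obtained by adding a new chord whose left endpoint is placed before all points of $C$ and whose right endpoint is placed in the $k$-th interval of $C$ (this chord is the new root chord). For a diagram $D'$, $\mathrm{Ins}_{D',k}(C)$ is the diagram obtained by placing all points of $D'$ (in order, with their matching) inside the $k$-th interval of $C$. *)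

From mathcomp Require Import all_boot.
Set Implicit Arguments. Unset Strict Implicit. Unset Printing Implicit Defensive.

(* A chord diagram of size n is represented canonically (up to order
   isomorphism) by the sequence s of length 2n over the points 0..2n-1
   (left to right), where nth 0 s i is the partner of point i. *)
Definition chord_diagram (s : seq nat) : Prop :=
  forall i, i < size s ->
    [/\ nth 0 s i < size s, nth 0 s (nth 0 s i) = i & nth 0 s i != i].

Definition nchords (s : seq nat) : nat := (size s)./2.

Definition concat (s1 s2 : seq nat) : seq nat :=
  s1 ++ map (fun p => p + size s1) s2.

Definition indecomposable (D : seq nat) : Prop :=
  ~ exists D1 D2, [/\ chord_diagram D1, chord_diagram D2,
                      0 < size D1, 0 < size D2 & D = concat D1 D2].

(* Interval k (1 <= k <= 2n-1) is the gap between point k-1 and point k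
   (0-indexed), i.e. it has exactly k points to its left. *)

(* Ins_{D,k}(C): place all points of D inside the k-th interval of C. *)
Definition ins (D : seq nat) (k : nat) (C : seq nat) : seq nat :=
  let m := size D in
  let sh p := if p < k then p else p + m in
  map sh (take k C) ++ map (fun p => p + k) D ++ map sh (drop k C).

(* R_k(C): new root chord from a new first point to the k-th interval of C. *)
Definition R (k : nat) (C : seq nat) : seq nat :=
  let sh p := if p < k then p.+1 else p.+2 in
  k.+1 :: map sh (take k C) ++ 0 :: map sh (drop k C).

From mathcomp Require Import all_boot zify.

Set Implicit Arguments.
Unset Strict Implicit.
Unset Printing Implicit Defensive.

(* Both [ins] and [R] splice a block of points into a relabelled diagram.
   Splicings at positions [i <= j] commute once [j] is shifted by the size of
   the first block, and the two relabellings commute on the old points, so both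
   identities reduce to comparing the inserted blocks.  In the second one the
   copy of D lies under the root chord, whose right end therefore moves by
   [size D = 2 |D|]. *)

Section Splice.

Variable T : Type.

Definition splice (i : nat) (B s : seq T) : seq T := take i s ++ B ++ drop i s.

Lemma splice0 B s : splice 0 B s = B ++ s.
Proof. by rewrite /splice take0 drop0. Qed.

Lemma splice_cons i B x s : splice i.+1 B (x :: s) = x :: splice i B s.
Proof. by []. Qed.

Lemma splice_cat A i B s : splice (size A + i) B (A ++ s) = A ++ splice i B s.
Proof. by elim: A => //= x A IHA; rewrite addSn splice_cons IHA. Qed.

Lemma spliceC i j B B' s : i <= j -> i <= size s ->
  splice (j + size B) B' (splice i B s) = splice i B (splice j B' s).
Proof.
elim: i j s => [|i IHi] j s le_ij le_is; first by rewrite !splice0 addnC splice_cat.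
case: s le_is => // x s le_is; case: j le_ij => // j le_ij.
by rewrite !splice_cons IHi.
Qed.

End Splice.

Lemma map_splice (T U : Type) (f : T -> U) i B s :
  map f (splice i B s) = splice i (map f B) (map f s).
Proof. by rewrite /splice !map_cat map_take map_drop. Qed.

Definition shift_from (k m p : nat) : nat := if p < k then p else p + m.

Lemma ins_splice D l C :
  ins D l C = splice l [seq d + l | d <- D] (map (shift_from l (size D)) C).
Proof. by rewrite /ins /splice map_take map_drop. Qed.

Lemma R_splice k C :
  R k C = k.+1 :: splice k [:: 0] [seq (shift_from k 1 p).+1 | p <- C].
Proof.
have shiftE : (fun p => if p < k then p.+1 else p.+2) =1
              (fun p => (shift_from k 1 p).+1).
  by move=> p; rewrite /shift_from addn1; case: ifP.
by rewrite /R !(eq_map shiftE) map_take map_drop.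
Qed.

Lemma shift_from_small k m p : p < k -> shift_from k m p = p.
Proof. by rewrite /shift_from => ->. Qed.

Lemma shift_from_large k m p : k <= p -> shift_from k m p = p + m.
Proof. by rewrite /shift_from ltnNge => ->. Qed.

Lemma shift_fromC_le k l m p : k <= l ->
  shift_from l.+2 m (shift_from k 1 p).+1 = (shift_from k 1 (shift_from l m p)).+1.
Proof. by move=> le_kl; rewrite /shift_from; repeat case: ifP; lia. Qed.

Lemma shift_fromC_ge k l m p : l <= k ->
  shift_from l.+1 m (shift_from k 1 p).+1 =
  (shift_from (k + m) 1 (shift_from l m p)).+1.
Proof. by move=> le_lk; rewrite /shift_from; repeat case: ifP; lia. Qed.

Lemma ins_R_right (D C : seq nat) k l : k <= l -> k <= size C ->
  ins D l.+2 (R k C) = R k (ins D l C).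
Proof.
move=> le_kl le_kC.
rewrite !R_splice !ins_splice /= map_splice !shift_from_small // splice_cons.
rewrite map_splice -!map_comp -(spliceC [:: 0] _ le_kl) ?size_map //.
congr (_ :: splice _ _ (splice _ _ _)); first by rewrite addn1.
  by apply: eq_map => d /=; rewrite shift_from_large; lia.
by apply: eq_map => p /=; rewrite shift_fromC_le.
Qed.

Lemma ins_R_under (D C : seq nat) k l :
    {in D, forall d, d < size D} -> l <= k -> k <= size C ->
  ins D l.+1 (R k C) = R (k + size D) (ins D l C).
Proof.
move=> D_lt le_lk le_kC.
rewrite !R_splice !ins_splice /= map_splice splice_cons /=.
rewrite shift_from_large // shift_from_small // addSn -!map_comp.
rewrite -(spliceC _ [:: 0] le_lk) ?size_map; last by lia.
rewrite map_splice -!map_comp.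
congr (_ :: splice _ _ (splice _ _ _)).
  by apply/eq_in_map => d /D_lt lt_d /=; rewrite shift_from_small; lia.
by apply: eq_map => p /=; rewrite shift_fromC_ge.
Qed.

Lemma chord_diagram_lt D : chord_diagram D -> {in D, forall d, d < size D}.
Proof. by move=> HD d /(nthP 0) [i lt_i <-]; case: (HD i lt_i). Qed.

Lemma chord_diagram_size D : chord_diagram D -> size D = 2 * nchords D.
Proof.
move=> HD; rewrite /nchords; set n := size D.
pose g (i : 'I_n) : 'I_n := insubd i (nth 0 D i).
have gE (i : 'I_n) : nat_of_ord (g i) = nth 0 D i.
  by rewrite insubdK //; case: (HD i (ltn_ord i)).
have gK : involutive g.
  by move=> i; apply: ord_inj; rewrite !gE; case: (HD i (ltn_ord i)).
pose A := [set i : 'I_n | i < g i].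
have gA : g @: A = ~: A.
  apply/setP => i; rewrite (can_imset_pre _ gK) !inE gK.
  by move: (HD i (ltn_ord i)); rewrite -!gE => -[_ _]; lia.
have := cardsC A; rewrite -gA card_imset; last exact: inv_inj gK.
by rewrite card_ord addnn => <-; rewrite doubleK mul2n.
Qed.

Theorem lemma3p2 (D C : seq nat) (k l : nat) :
  chord_diagram D -> indecomposable D -> chord_diagram C ->
  (1 <= k -> k <= l - 2 -> l - 2 <= size C - 1 -> 2 <= l ->
     ins D l (R k C) = R k (ins D (l - 2) C)) /\
  (1 <= l - 1 -> l - 1 <= k -> k <= size C - 1 -> 1 <= l ->
     ins D l (R k C) = R (k + 2 * nchords D) (ins D (l - 1) C)).
Proof.
move=> HD _ _; split=> [_ le_kl le_lC ge2_l | _ le_lk le_kC ge1_l].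
  by rewrite -[in LHS](subnK ge2_l) addn2; apply: ins_R_right; lia.
rewrite -[in LHS](subnK ge1_l) addn1 -chord_diagram_size //.
by apply: ins_R_under; [exact: chord_diagram_lt | lia | lia].
Qed.
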